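(* For all real $\alpha,\beta$ with $\beta\neq0$, every integer $n\ge0$ and every real $x$, \[ x^n=\sum_{k=0}^{n}\widetilde S_{\alpha,\beta}(n,k)\,P_k^{(\alpha,\beta)}(x),\qquad\text{where }\ \widetilde S_{\alpha,\beta}(n,k)=(-1)^{n-k}S_{-\alpha/\beta,\,1/\beta}(n,k). \]
   Context: For real $a$ and integer $n\ge 1$, $\langle a\rangle_n:=a(a+1)\cdots(a+n-1)$ and $\langle a\rangle_0:=1$. For real $\alpha,\beta$ with $\beta\neq0$, the polynomials $P_n^{(\alpha,\beta)}(x)$, $n\ge0$, are defined by $\sum_{n\ge0}P_n^{(\alpha,\beta)}(x)\frac{t^n}{n!}=(1-t)^{\alpha}\exp\big(x((1-t)^{\beta}-1)\big)$ (formal power series in $t$). For real $\alpha,\beta$ and integers $0\le k\le n$, $S_{\alpha,\beta}(n,k):=\frac{1}{k!}\sum_{j=0}^{k}(-1)^{k-j}\binom{k}{j}\langle-\alpha-\beta j\rangle_n$. *)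

(* the statement is purely algebraic (formal power series in t
   with real coefficients), so we state it over an arbitrary realFieldType R. *)
From HB Require Import structures.
From mathcomp Require Import all_boot all_order all_algebra.
Set Implicit Arguments. Unset Strict Implicit. Unset Printing Implicit Defensive.
Import Order.TTheory GRing.Theory Num.Theory.
Local Open Scope ring_scope.

Definition rising {R : ringType} (a : R) (n : nat) : R :=
  \prod_(i < n) (a + i%:R).

Definition Sab {R : fieldType} (al be : R) (n k : nat) : R :=
  (k`!%:R)^-1 * \sum_(j < k.+1)
     ((-1) ^+ (k - j) * 'C(k, j)%:R * rising (- al - be * j%:R) n).

Definition fps (R : Type) := nat -> R.

Definition fps_one {R : ringType} : fps R := fun n => (n == 0)%:R.

Definition fps_mul {R : ringType} (f g : fps R) : fps R :=
  fun n => \sum_(i < n.+1) f i * g (n - i)%N.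

Definition fps_pow {R : ringType} (f : fps R) (m : nat) : fps R :=
  iter m (fps_mul f) fps_one.

Definition gbinom {R : fieldType} (a : R) (n : nat) : R :=
  (\prod_(i < n) (a - i%:R)) / n`!%:R.

(* (1 - t)^a = sum_n binom(a,n) (-t)^n  (binomial series) *)
Definition one_minus_t_pow {R : fieldType} (a : R) : fps R :=
  fun n => (-1) ^+ n * gbinom a n.

(* exp(f) for a series f with zero constant term: sum_m f^m / m!;
   the coefficient of t^n only involves m <= n. *)
Definition fps_exp0 {R : fieldType} (f : fps R) : fps R :=
  fun n => \sum_(m < n.+1) fps_pow f m n / m`!%:R.

(* P_n^{(alpha,beta)}(x) = n! [t^n] (1-t)^alpha exp(x((1-t)^beta - 1)) *)
Definition Pab {R : fieldType} (al be : R) (n : nat) (x : R) : R :=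
  n`!%:R * fps_mul (one_minus_t_pow al)
     (fps_exp0 (fun k => x * (one_minus_t_pow be k - fps_one k))) n.

From HB Require Import structures.
From mathcomp Require Import all_boot all_order all_algebra.
From mathcomp Require Import ring zify.
Set Implicit Arguments. Unset Strict Implicit. Unset Printing Implicit Defensive.
Import Order.TTheory GRing.Theory Num.Theory.
Local Open Scope ring_scope.

(* Expanding exp(x((1-t)^beta - 1)) = sum_m x^m/m! ((1-t)^beta - 1)^m by the
   binomial theorem and using (1-t)^a (1-t)^b = (1-t)^(a+b) gives
     P_k(x) = sum_m x^m/m! sum_i (-1)^i C(m,i) <-alpha - beta (m-i)>_k.
   Newton's forward-difference formula in the basis of rising factorials shows
   that the coefficients S~(n,k) are exactly those for which
     sum_k S~(n,k) <-alpha - beta y>_k = y (y-1) ... (y-n+1).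
   Hence sum_k S~(n,k) P_k(x) = sum_m x^m/m! sum_i (-1)^i C(m,i) (m-i)^_n, and
   this n-th difference of the falling factorial is n! for m = n and 0 for m < n. *)

Definition falling {R : nzRingType} (a : R) (n : nat) : R :=
  \prod_(i < n) (a - i%:R).

Definition bin_transform {R : nzRingType} (a : nat -> R) (k : nat) : R :=
  \sum_(i < k.+1) (-1) ^+ i * 'C(k, i)%:R * a i.

Section BinomialSums.
Variable R : comNzRingType.

Lemma sum_mul_binS (f : nat -> R) (n : nat) :
  \sum_(k < n.+2) f k * 'C(n.+1, k)%:R =
  \sum_(k < n.+1) (f k + f k.+1) * 'C(n, k)%:R.
Proof.
rewrite big_ord_recl /= bin0 mulr1.
under eq_bigr => i _ do rewrite /bump /= binS natrD mulrDr.
rewrite big_split /=.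
under [in RHS]eq_bigr => i _ do rewrite mulrDl.
rewrite big_split /= [in RHS]big_ord_recl /= bin0 mulr1 -addrA; congr (_ + _).
rewrite big_ord_recr /= bin_small // mulr0n mulr0 addr0.
by congr (_ + _); apply: eq_bigr => i _; rewrite /bump /= ?add1n.
Qed.

Lemma bin_transformS (a : nat -> R) (k : nat) :
  bin_transform a k.+1 = bin_transform a k - bin_transform (fun i => a i.+1) k.
Proof.
rewrite /bin_transform.
under eq_bigr => i _ do rewrite [_ * _ * _]mulrAC.
rewrite (sum_mul_binS (fun i => (-1) ^+ i * a i)) -sumrB; apply: eq_bigr => i _.
rewrite exprS; ring.
Qed.

Lemma bin_transformK (a : nat -> R) (n : nat) :
  \sum_(k < n.+1) (-1) ^+ k * 'C(n, k)%:R * bin_transform a k = a n.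
Proof.
elim: n a => [|n IH] a; first by rewrite big_ord1 /bin_transform big_ord1 !mul1r.
under eq_bigr => i _ do rewrite [_ * _ * _]mulrAC.
rewrite (sum_mul_binS (fun i => (-1) ^+ i * bin_transform a i)).
rewrite -[RHS](IH (fun i => a i.+1)); apply: eq_bigr => i _.
rewrite bin_transformS exprS; ring.
Qed.

Lemma fallingS (a : R) (n : nat) : falling a n.+1 = falling a n * (a - n%:R).
Proof. by rewrite /falling big_ord_recr. Qed.

Lemma rising_opp (a : R) (k : nat) : rising (- a) k = (-1) ^+ k * falling a k.
Proof.
rewrite /rising /falling -[in (-1) ^+ k](card_ord k) -prodrN.
by apply: eq_bigr => i _; rewrite opprB addrC.
Qed.

Lemma falling_natr (j n : nat) : falling (j%:R : R) n = (j ^_ n)%:R.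
Proof.
elim: n => [|n IH]; first by rewrite /falling big_ord0 ffactn0.
rewrite fallingS IH ffactnSr natrM.
case: (leqP n j) => [le_nj|lt_jn]; first by rewrite natrB.
by rewrite ffact_small // mulr0n !mul0r.
Qed.

Lemma falling_add (a b : R) (n : nat) :
  falling (a + b) n =
  \sum_(i < n.+1) falling a i * falling b (n - i) * 'C(n, i)%:R.
Proof.
elim: n => [|n IH]; first by rewrite big_ord1 /falling !big_ord0 mulr1 mul1r.
rewrite (sum_mul_binS (fun i => falling a i * falling b (n.+1 - i))).
rewrite fallingS IH mulr_suml; apply: eq_bigr => i _.
have le_in : (i <= n)%N by rewrite -ltnS.
rewrite subSn // fallingS subSS fallingS natrB //; ring.
Qed.

Lemma sum_sign_bin_falling (m n : nat) : (m <= n)%N ->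
  \sum_(i < m.+1) (-1) ^+ i * 'C(m, i)%:R * falling ((m - i)%N%:R : R) n
  = (m == n)%:R * n`!%:R.
Proof.
move=> le_mn; under eq_bigr => i _ do rewrite falling_natr.
have [->|lt_mn] := eqVneq m n; last first.
  rewrite mul0r big1 // => i _; rewrite ffact_small ?mulr0 //.
  by have := ltn_ord i; move: lt_mn => /eqP; lia.
rewrite big_ord_recl /= subn0 ffactnn expr0 bin0 !mul1r big1 ?addr0 // => i _.
by rewrite ffact_small ?mulr0 // /bump /=; have := ltn_ord i; lia.
Qed.

End BinomialSums.

Lemma sign_subn (R : nzRingType) (m n : nat) : (m <= n)%N ->
  (-1) ^+ (n - m) = (-1) ^+ n * (-1) ^+ m :> R.
Proof.
move=> le_mn; rewrite -{2}(subnK le_mn) exprD -mulrA -exprD addnn -mul2n exprM.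
by rewrite sqrrN !expr1n mulr1.
Qed.

Section NewtonInterpolation.
Variable R : numFieldType.

Lemma fact_natr_neq0 (n : nat) : (n`!%:R : R) != 0.
Proof. by rewrite pnatr_eq0 -lt0n fact_gt0. Qed.

Lemma rising_opp_natr (i k : nat) :
  (k`!%:R)^-1 * rising (- i%:R : R) k = (-1) ^+ k * 'C(i, k)%:R.
Proof.
rewrite rising_opp falling_natr -bin_ffact natrM.
by field; exact: fact_natr_neq0.
Qed.

Lemma newton_rising_nodes (a : nat -> R) (N i : nat) : (i <= N)%N ->
  \sum_(k < N.+1) (k`!%:R)^-1 * bin_transform a k * rising (- i%:R) k = a i.
Proof.
move=> le_iN; rewrite -[RHS](bin_transformK a i).
rewrite (big_ord_widen N.+1
  (fun k => (-1) ^+ k * 'C(i, k)%:R * bin_transform a k)) ?ltnS //.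
rewrite [RHS]big_mkcond /=.
apply: eq_bigr => k _; rewrite mulrAC rising_opp_natr.
by case: ltnP => [//|lt_ik]; rewrite bin_small // !(mulr0, mul0r).
Qed.

Definition rising_poly (k : nat) : {poly R} := \prod_(l < k) ('X - (- l%:R)%:P).

Lemma size_rising_poly (k : nat) : size (rising_poly k) = k.+1.
Proof. by rewrite size_prod_XsubC -[index_enum _]enumT size_enum_ord. Qed.

Lemma horner_rising_poly (k : nat) (y : R) : (rising_poly k).[y] = rising y k.
Proof.
rewrite horner_prod; apply: eq_bigr => l _.
by rewrite hornerXsubC opprK.
Qed.

Lemma newton_rising (N : nat) (p : {poly R}) (y : R) : (size p <= N.+1)%N ->
  p.[y] = \sum_(k < N.+1)
            (k`!%:R)^-1 * bin_transform (fun i => p.[- i%:R]) k * rising y k.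
Proof.
move=> size_p.
set c := fun k : nat => (k`!%:R)^-1 * bin_transform (fun i => p.[- i%:R]) k.
pose r := \sum_(k < N.+1) c k *: rising_poly k.
have r_val z : r.[z] = \sum_(k < N.+1) c k * rising z k.
  by rewrite horner_sum; apply: eq_bigr => k _; rewrite hornerZ horner_rising_poly.
suff p_eq_r : p = r by rewrite {1}p_eq_r r_val.
apply/eqP; rewrite -subr_eq0; apply/eqP.
apply: (@roots_geq_poly_eq0 _ _ [seq - i%:R | i <- iota 0 N.+1]).
- apply/allP => z /mapP[i]; rewrite mem_iota add0n => /andP[_ lt_iN] ->.
  by rewrite rootE hornerD hornerN r_val newton_rising_nodes // subrr.
- rewrite map_inj_uniq ?iota_uniq // => i j /eqP.
  by rewrite eqr_opp eqr_nat => /eqP.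
rewrite size_map size_iota; apply: leq_trans (size_polyD _ _) _.
rewrite geq_max size_p size_polyN; apply: leq_trans (size_sum _ _ _) _.
apply/bigmax_leqP => k _; apply: leq_trans (size_scale_leq _ _) _.
by rewrite size_rising_poly.
Qed.

End NewtonInterpolation.

Lemma sum_Stilde_rising (R : numFieldType) (al be y : R) (n : nat) : be != 0 ->
  \sum_(k < n.+1) ((-1) ^+ (n - k) * Sab (- al / be) (1 / be) n k)
    * rising (- al - be * y) k = falling y n.
Proof.
move=> be_neq0.
(* Newton's formula for z |-> <(z + alpha) / beta>_n: its values at the nodes
   -j are the rising factorials occurring in Sab. *)
pose q := rising_poly R n \Po (be^-1 *: ('X + al%:P)).
have q_val z : q.[z] = rising ((z + al) / be) n.
  by rewrite horner_comp hornerZ hornerD hornerX hornerC horner_rising_poly mulrC.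
have size_q : (size q <= n.+1)%N.
  by rewrite size_comp_poly2 ?size_rising_poly // size_scale ?invr_eq0 ?size_XaddC.
have := newton_rising (- al - be * y) size_q.
rewrite q_val (_ : (- al - be * y + al) / be = - y); last by field.
rewrite rising_opp => /(congr1 (GRing.mul ((-1) ^+ n))); rewrite signrMK => ->.
rewrite mulr_sumr; apply: eq_bigr => k _; rewrite !mulrA; congr (_ * _).
have le_kn : (k <= n)%N by rewrite -ltnS.
rewrite /bin_transform mulrAC [RHS]mulrAC; congr (_ * _).
rewrite !mulr_sumr; apply: eq_bigr => j _.
have le_jk : (j <= k)%N by rewrite -ltnS.
rewrite !mulrA -exprD q_val.
rewrite (_ : (- j%:R + al) / be = - (- al / be) - 1 / be * j%:R); last by field.
have -> : (n - k + (k - j) = n - j)%N by lia.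
by rewrite sign_subn // (leq_trans le_jk le_kn).
Qed.

Definition fps_trunc {R : nzRingType} (N : nat) (f : fps R) : {poly R} :=
  \poly_(i < N.+1) f i.

Section Truncation.
Variable R : nzRingType.
Implicit Types (f g : fps R) (p q : {poly R}).

Lemma coef_fps_trunc f (N l : nat) : (l <= N)%N -> (fps_trunc N f)`_l = f l.
Proof. by move=> le_lN; rewrite coef_poly ltnS le_lN. Qed.

Lemma coefM_fps f g p q (l : nat) :
  (forall i, (i <= l)%N -> p`_i = f i) -> (forall i, (i <= l)%N -> q`_i = g i) ->
  (p * q)`_l = fps_mul f g l.
Proof.
move=> pf qg; rewrite coefM; apply: eq_bigr => i _.
have le_il : (i <= l)%N by rewrite -ltnS.
by rewrite pf // qg // leq_subr.
Qed.

Lemma coef_fps_truncX f (N m l : nat) : (l <= N)%N ->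
  (fps_trunc N f ^+ m)`_l = fps_pow f m l.
Proof.
elim: m l => [|m IH] l le_lN; first by rewrite expr0 coef1.
rewrite exprS (coefM_fps (f := f) (g := fps_pow f m)) // => i le_il.
  by rewrite coef_fps_trunc // (leq_trans le_il le_lN).
by rewrite IH // (leq_trans le_il le_lN).
Qed.

Lemma fps_pow_small f (m l : nat) : f 0%N = 0 -> (l < m)%N -> fps_pow f m l = 0.
Proof.
move=> f0; elim: m l => [|m IH] l lt_lm //.
rewrite /fps_pow iterS -/(fps_pow f m) /fps_mul big1 // => i _.
case: (posnP i) => [->|i_gt0]; first by rewrite f0 mul0r.
by rewrite IH ?mulr0 //; have := ltn_ord i; lia.
Qed.

End Truncation.

Section BinomialSeries.
Variable R : numFieldType.
Implicit Types (a b x : R).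

Lemma one_minus_t_powE a (n : nat) :
  one_minus_t_pow a n = (-1) ^+ n * falling a n / n`!%:R.
Proof. by rewrite /one_minus_t_pow /gbinom mulrA. Qed.

Lemma one_minus_t_pow0 a : one_minus_t_pow a 0 = 1.
Proof. by rewrite one_minus_t_powE /falling big_ord0 !mul1r invr1. Qed.

Lemma fact_one_minus_t_pow a (k : nat) :
  k`!%:R * one_minus_t_pow a k = rising (- a) k.
Proof.
rewrite one_minus_t_powE rising_opp.
by field; exact: fact_natr_neq0.
Qed.

Lemma one_minus_t_powD a b :
  fps_mul (one_minus_t_pow a) (one_minus_t_pow b) =1 one_minus_t_pow (a + b).
Proof.
move=> n; rewrite one_minus_t_powE falling_add !mulr_sumr mulr_suml.
apply: eq_bigr => i _; rewrite !one_minus_t_powE.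
have le_in : (i <= n)%N by rewrite -ltnS.
have -> : ('C(n, i)%:R : R) = n`!%:R / (i`!%:R * (n - i)`!%:R).
  by rewrite -(bin_fact le_in) !natrM; field; rewrite !fact_natr_neq0.
rewrite -[in (-1) ^+ n](subnKC le_in) exprD.
by field; rewrite !fact_natr_neq0.
Qed.

Lemma coef_trunc_one_minus_t_powMX a b (N j l : nat) : (l <= N)%N ->
  (fps_trunc N (one_minus_t_pow a) * fps_trunc N (one_minus_t_pow b) ^+ j)`_l
  = one_minus_t_pow (a + b * j%:R) l.
Proof.
elim: j l => [|j IH] l le_lN.
  by rewrite expr0 mulr1 mulr0 addr0 coef_fps_trunc.
rewrite exprSr mulrA (coefM_fps (f := one_minus_t_pow (a + b * j%:R))
                               (g := one_minus_t_pow b)).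
- by rewrite one_minus_t_powD -natr1 mulrDr mulr1 addrA.
- by move=> i le_il; rewrite IH // (leq_trans le_il le_lN).
by move=> i le_il; rewrite coef_fps_trunc // (leq_trans le_il le_lN).
Qed.

Lemma coef_trunc_one_minus_t_pow_binomial a b (N m l : nat) : (l <= N)%N ->
  (fps_trunc N (one_minus_t_pow a)
     * (fps_trunc N (one_minus_t_pow b) - 1) ^+ m)`_l
  = \sum_(i < m.+1)
      (-1) ^+ i * 'C(m, i)%:R * one_minus_t_pow (a + b * (m - i)%N%:R) l.
Proof.
move=> le_lN; rewrite exprBn mulr_sumr coef_sum; apply: eq_bigr => i _.
rewrite expr1n mulr1 (mulrnAr (fps_trunc N _)) coefMn mulrCA.
rewrite -(rmorph_sign (@polyC R)) coefCM.
by rewrite coef_trunc_one_minus_t_powMX // -[RHS]mulrA mulr_natl -mulrnAr.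
Qed.

Lemma fps_exp0_trunc (u : fps R) (N l : nat) : u 0%N = 0 -> (l <= N)%N ->
  fps_exp0 u l = (\sum_(m < N.+1) (m`!%:R)^-1 *: fps_trunc N u ^+ m)`_l.
Proof.
move=> u0 le_lN; rewrite /fps_exp0 coef_sum.
rewrite (big_ord_widen N.+1 (fun m => fps_pow u m l / m`!%:R)) ?ltnS //.
rewrite [LHS]big_mkcond /=; apply: eq_bigr => m _.
rewrite coefZ coef_fps_truncX // mulrC.
by case: ltnP => // lt_lm; rewrite fps_pow_small // mulr0.
Qed.

End BinomialSeries.

Lemma Pab_expansion (R : numFieldType) (al be x : R) (N k : nat) : (k <= N)%N ->
  Pab al be k x = \sum_(m < N.+1) x ^+ m / m`!%:R *
    \sum_(i < m.+1) (-1) ^+ i * 'C(m, i)%:R * rising (- al - be * (m - i)%N%:R) k.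
Proof.
move=> le_kN.
set u := fun l => x * (one_minus_t_pow be l - fps_one l).
set A := fps_trunc N (one_minus_t_pow be).
have u0 : u 0%N = 0 by rewrite /u one_minus_t_pow0 subrr mulr0.
have trunc_u : fps_trunc N u = x *: (A - 1).
  apply/polyP => i; rewrite coefZ coefB coef1 !coef_poly /u /fps_one.
  case: ltnP => // lt_Ni; rewrite -[i]prednK ?(leq_trans _ lt_Ni) //=.
  by rewrite mulr0n subr0 mulr0.
rewrite /Pab -(coefM_fps (p := fps_trunc N (one_minus_t_pow al))
   (q := \sum_(m < N.+1) (m`!%:R)^-1 *: fps_trunc N u ^+ m)); first last.
- by move=> i le_ik; rewrite -fps_exp0_trunc // (leq_trans le_ik le_kN).
- by move=> i le_ik; rewrite coef_fps_trunc // (leq_trans le_ik le_kN).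
rewrite trunc_u mulr_sumr coef_sum mulr_sumr; apply: eq_bigr => m _.
rewrite exprZn scalerA -scalerAr coefZ coef_trunc_one_minus_t_pow_binomial //.
rewrite mulrCA [X in X * _ = _]mulrC; congr (_ * _).
rewrite mulr_sumr; apply: eq_bigr => i _.
by rewrite mulrCA fact_one_minus_t_pow opprD.
Qed.

Lemma sum_Stilde_Pab (R : numFieldType) (al be x : R) (n : nat) : be != 0 ->
  \sum_(k < n.+1) ((-1) ^+ (n - k) * Sab (- al / be) (1 / be) n k) * Pab al be k x
  = \sum_(m < n.+1) x ^+ m / m`!%:R *
      \sum_(i < m.+1) (-1) ^+ i * 'C(m, i)%:R * falling ((m - i)%N%:R) n.
Proof.
move=> be_neq0.
under eq_bigr => k _ do rewrite (Pab_expansion al be x (leq_ord k)) mulr_sumr.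
rewrite exchange_big /=; apply: eq_bigr => m _.
under eq_bigr => k _ do rewrite !mulr_sumr.
rewrite exchange_big mulr_sumr /=; apply: eq_bigr => i _.
rewrite -(sum_Stilde_rising al _ n be_neq0) !mulr_sumr; apply: eq_bigr => k _.
by rewrite mulrCA; congr (_ * _); exact: mulrCA.
Qed.

Theorem proposition2 (R : realFieldType) (al be : R) (hbe : be != 0)
    (n : nat) (x : R) :
  x ^+ n = \sum_(k < n.+1)
     ((-1) ^+ (n - k) * Sab (- al / be) (1 / be) n k) * Pab al be k x.
Proof.
rewrite sum_Stilde_Pab //.
under eq_bigr => m _ do rewrite sum_sign_bin_falling ?leq_ord //.
rewrite big_ord_recr /= eqxx mul1r divfK ?fact_natr_neq0 // big1 ?add0r //.
by move=> m _; rewrite (ltn_eqF (ltn_ord m)) mul0r mulr0.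
Qed.
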